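(* In the setting described in the context, suppose there exist $\hat{i}\in I$ and $j\in J_{\hat{i}}$ with $\hat{x}_j\neq0$. Then RLO-IU-SD is feasible if and only if $\sum_{j\in J}a_{ij}\hat{x}_j\ge b_i$ for all $i\in I$.
   Context: Let $I=\{1,\dots,m\}$, $J=\{1,\dots,n\}$. Given are $a_{ij}\in\mathbb{R}$, $b\in\mathbb{R}^m$, nonempty index sets $J_i\subseteq J$ ($i\in I$), an observed point $\hat{x}\in\mathbb{R}^n$, prior vectors $\hat{\alpha}_i\in\mathbb{R}^{|J_i|}$, real weights $\xi_i$ ($i\in I$), and a norm $\|\cdot\|$. The problem RLO-IU-SD is \[ \min_{\alpha,c,u,\pi,\lambda,\mu}\ \sum_{i\in I}\xi_i\|\alpha_i-\hat{\alpha}_i\| \] subject to: $\sum_{j\in J}c_j\hat{x}_j-\sum_{i\in I}b_i\pi_i=0$; $\alpha_{ij}\hat{x}_j+u_{ij}\ge0$ and $-\alpha_{ij}\hat{x}_j+u_{ij}\ge0$ for all $j\in J_i,i\in I$; $\sum_{j\in J}a_{ij}\hat{x}_j-\sum_{j\in J_i}u_{ij}\ge b_i$ for all $i\in I$; $\alpha_{ij}\ge0$ for all $j\in J_i,i\in I$; $\sum_{i\in I}\pi_i=1$; $\sum_{i\in I}a_{ij}\pi_i+\sum_{i\in I:j\in J_i}\alpha_{ij}(\lambda_{ij}-\mu_{ij})=c_j$ for all $j\in J$; $\pi_i=\lambda_{ij}+\mu_{ij}$ for all $j\in J_i,i\in I$; $\pi_i,\lambda_{ij},\mu_{ij}\ge0$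 for all $j\in J_i,i\in I$. Here $\alpha_i=(\alpha_{ij})_{j\in J_i}$, $c\in\mathbb{R}^n$, $\pi\in\mathbb{R}^m$. *)

From mathcomp Require Import all_boot all_order all_algebra.
From mathcomp Require Import reals.
Set Implicit Arguments. Unset Strict Implicit. Unset Printing Implicit Defensive.
Import Order.TTheory GRing.Theory Num.Theory.
Local Open Scope ring_scope.

(* I = 'I_m, J = 'I_n, J_i = Js i : {set 'I_n}.
   Variables alpha_ij, u_ij, lambda_ij, mu_ij (j in J_i) are represented by
   functions 'I_m -> 'I_n -> R, of which only the entries with j \in Js i
   are constrained / meaningful. *)

Definition RLO_IU_SD_constraints (R : realType) (m n : nat)
    (a : 'I_m -> 'I_n -> R) (b : 'I_m -> R) (Js : 'I_m -> {set 'I_n})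
    (xhat : 'I_n -> R)
    (alpha : 'I_m -> 'I_n -> R) (c : 'I_n -> R) (u : 'I_m -> 'I_n -> R)
    (pi : 'I_m -> R) (lambda mu : 'I_m -> 'I_n -> R) : Prop :=
  (\sum_(j < n) c j * xhat j - \sum_(i < m) b i * pi i = 0) /\
      (forall i j, j \in Js i -> alpha i j * xhat j + u i j >= 0) /\
      (forall i j, j \in Js i -> - (alpha i j * xhat j) + u i j >= 0) /\
      (forall i, \sum_(j < n) a i j * xhat j - \sum_(j in Js i) u i j >= b i) /\
      (forall i j, j \in Js i -> alpha i j >= 0) /\
      \sum_(i < m) pi i = 1 /\
      (forall j, \sum_(i < m) a i j * pi i
                 + \sum_(i < m | j \in Js i) alpha i j * (lambda i j - mu i j)
                 = c j) /\
      (forall i j, j \in Js i -> pi i = lambda i j + mu i j) /\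
      (forall i, pi i >= 0) /\
      (forall i j, j \in Js i -> lambda i j >= 0 /\ mu i j >= 0).

Definition RLO_IU_SD_feasible (R : realType) (m n : nat)
    (a : 'I_m -> 'I_n -> R) (b : 'I_m -> R) (Js : 'I_m -> {set 'I_n})
    (xhat : 'I_n -> R) : Prop :=
  exists alpha c u pi lambda mu,
    RLO_IU_SD_constraints a b Js xhat alpha c u pi lambda mu.

From mathcomp Require Import all_boot all_order all_algebra.
From mathcomp Require Import reals.
From mathcomp Require Import ring lra.
Import Order.TTheory GRing.Theory Num.Theory.
Local Open Scope ring_scope.

(* The two constraints alpha x + u >= 0 and -(alpha x) + u >= 0 force
   u >= |alpha x| >= 0, so every feasible point satisfies the nominal
   constraints a_i x >= b_i.  Conversely, the slack s of a nominal constraint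
   i^ is absorbed by putting all dual weight pi on i^ and a single uncertainty
   radius alpha = s / |x_j| on a coordinate j of J_i^ with x_j <> 0; taking
   lambda - mu = - sg x_j, the dual term alpha (lambda - mu) x_j equals -s and
   closes the duality gap. *)

Lemma sum_delta (R : pzSemiRingType) (I : finType) (P : pred I) (k : I)
    (F : I -> R) :
  P k -> \sum_(i | P i) F i * (i == k)%:R = F k.
Proof.
move=> Pk; rewrite (bigD1 k) //= eqxx mulr1 big1 ?addr0 // => i /andP[_ ne].
by rewrite (negbTE ne) mulr0.
Qed.

Lemma RLO_IU_SD_constraints_nominal (R : realType) (m n : nat)
    (a : 'I_m -> 'I_n -> R) (b : 'I_m -> R) (Js : 'I_m -> {set 'I_n})
    (xhat : 'I_n -> R) alpha c u pi lambda mu :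
  RLO_IU_SD_constraints a b Js xhat alpha c u pi lambda mu ->
  forall i, b i <= \sum_(j < n) a i j * xhat j.
Proof.
move=> [_ [upper [lower [robust _]]]] i.
apply: le_trans (robust i) _; rewrite lerBlDr lerDl.
apply: sumr_ge0 => j jJ.
by have := upper i j jJ; have := lower i j jJ; lra.
Qed.

Section Witness.

Context {R : realType} {m n : nat} {a : 'I_m -> 'I_n -> R} {b : 'I_m -> R}.
Context {Js : 'I_m -> {set 'I_n}} {xhat : 'I_n -> R} {ih : 'I_m} {j0 : 'I_n}.
Hypotheses (j0_in : j0 \in Js ih) (xj0_neq0 : xhat j0 != 0).
Hypothesis nominal : forall i, b i <= \sum_(j < n) a i j * xhat j.

Definition witness_slack := \sum_(j < n) a ih j * xhat j - b ih.
Definition witness_radius := witness_slack / `|xhat j0|.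
Definition witness_sign := Num.sg (xhat j0).

Definition witness_pi (i : 'I_m) : R := (i == ih)%:R.
Definition witness_alpha i j :=
  if (i == ih) && (j == j0) then witness_radius else 0.
Definition witness_u i j := witness_alpha i j * `|xhat j|.
Definition witness_lambda i (j : 'I_n) := witness_pi i * (1 - witness_sign) / 2.
Definition witness_mu i (j : 'I_n) := witness_pi i * (1 + witness_sign) / 2.
Definition witness_c j :=
  a ih j - (j == j0)%:R * (witness_radius * witness_sign).

Lemma witness_radius_ge0 : 0 <= witness_radius.
Proof. by rewrite divr_ge0 // subr_ge0. Qed.

Lemma witness_alpha_ge0 i j : 0 <= witness_alpha i j.
Proof. by rewrite /witness_alpha; case: ifP => // _; exact: witness_radius_ge0. Qed.

Lemma witness_pi_ge0 i : 0 <= witness_pi i.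
Proof. exact: ler0n. Qed.

Lemma witness_sign_bound : -1 <= witness_sign <= 1.
Proof. by rewrite -ler_norml normr_sg; case: (_ != 0). Qed.

Lemma sum_witness_pi (F : 'I_m -> R) : \sum_(i < m) F i * witness_pi i = F ih.
Proof. exact: sum_delta. Qed.

Lemma sum_witness_u i :
  \sum_(j in Js i) witness_u i j = (i == ih)%:R * witness_slack.
Proof.
rewrite /witness_u /witness_alpha; have [->|ne] := eqVneq i ih; last first.
  by rewrite mul0r big1 // => j _; rewrite mul0r.
rewrite (bigD1 j0) //= big1 => [|j /andP[_ /negbTE ->]]; last by rewrite mul0r.
by rewrite eqxx addr0 mul1r divfK // normr_eq0.
Qed.

Lemma witness_duality_gap :
  \sum_(j < n) witness_c j * xhat j - \sum_(i < m) b i * witness_pi i = 0.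
Proof.
rewrite sum_witness_pi /witness_c.
under eq_bigr => j _ do rewrite mulrBl [_%:R * _]mulrC [X in _ - X]mulrAC.
rewrite sumrB (@sum_delta _ _ xpredT) // -mulrA -normrEsg.
by rewrite divfK ?normr_eq0 // /witness_slack; ring.
Qed.

Lemma witness_stationarity j :
  \sum_(i < m) a i j * witness_pi i
  + \sum_(i < m | j \in Js i)
      witness_alpha i j * (witness_lambda i j - witness_mu i j)
  = witness_c j.
Proof.
rewrite sum_witness_pi /witness_c /witness_alpha.
have [->|ne] := eqVneq j j0; last first.
  by rewrite big1 => [|i _]; rewrite ?andbF ?mul0r ?subr0 ?addr0.
rewrite (bigD1 ih) //= big1 => [|i /andP[_ /negbTE ->]] //; last exact: mul0r.
rewrite /witness_lambda /witness_mu /witness_pi !eqxx /= addr0 !mul1r.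
by field.
Qed.

Lemma witness_constraints :
  RLO_IU_SD_constraints a b Js xhat witness_alpha witness_c witness_u
    witness_pi witness_lambda witness_mu.
Proof.
have alpha_abs i j :
    - witness_u i j <= witness_alpha i j * xhat j <= witness_u i j.
  by rewrite -ler_norml normrM ger0_norm // witness_alpha_ge0.
have sign := witness_sign_bound.
split; first exact: witness_duality_gap.
split; first by move=> i j _; have /andP[] := alpha_abs i j; lra.
split; first by move=> i j _; have /andP[] := alpha_abs i j; lra.
split.
  move=> i; rewrite sum_witness_u; have [->|ne] := eqVneq i ih.
    by rewrite mul1r /witness_slack opprB addrC subrK.
  by rewrite mul0r subr0.
split; first by move=> i j _; exact: witness_alpha_ge0.
split.
  by rewrite -(sum_witness_pi (fun=> 1)); apply: eq_bigr => i _; rewrite mul1r.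
split; first exact: witness_stationarity.
split; first by move=> i j _; rewrite /witness_lambda /witness_mu; field.
split; first exact: witness_pi_ge0.
move=> i j _; rewrite /witness_lambda /witness_mu.
by split; apply: divr_ge0; rewrite ?mulr_ge0 ?witness_pi_ge0 //; lra.
Qed.

End Witness.

Theorem proposition3 (R : realType) (m n : nat)
    (a : 'I_m -> 'I_n -> R) (b : 'I_m -> R) (Js : 'I_m -> {set 'I_n})
    (xhat : 'I_n -> R)
    (hJs : forall i, Js i != set0)
    (hx : exists (ihat : 'I_m) (j : 'I_n), j \in Js ihat /\ xhat j != 0) :
  RLO_IU_SD_feasible a b Js xhat <->
  (forall i : 'I_m, \sum_(j < n) a i j * xhat j >= b i).
Proof.
split=> [[alpha [c [u [pi [lambda [mu feasible]]]]]] | nominal].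
  exact: RLO_IU_SD_constraints_nominal feasible.
have [ih [j0 [j0_in xj0_neq0]]] := hx.
by do 6 eexists; exact: witness_constraints j0_in xj0_neq0 nominal.
Qed.
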